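(* Let $m\ge1$ and let $C_k$ be the $\mathbb Z_2$-vector space with basis the $k$-element subsets of $\{1,\dots,2m\}$. Define $\partial_k\colon C_k\to C_{k-2}$ on basis elements by $\partial_k(\Delta)=\sum\Gamma$, the sum over all $(k-2)$-element subsets $\Gamma\subset\Delta$. Then $$\dim_{\mathbb Z_2}\ker\partial_{m+1}=\binom{2m}{m-1}-\sum_{i=0}^{m-1}2^{m-1-i}\binom{2i}{i}.$$
   Context: $\mathbb Z_2=\mathbb Z/2\mathbb Z$; $C_k=0$ for $k<0$. *)

From HB Require Import structures.
From mathcomp Require Import all_boot all_order all_algebra.
Set Implicit Arguments. Unset Strict Implicit. Unset Printing Implicit Defensive.
Import GRing.Theory.

(* k-element subsets of the ground set 'I_n (= {0,...,n-1}, standing for {1,...,n}). *)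
Definition ksub (n k : nat) : {set {set 'I_n}} := [set A : {set 'I_n} | #|A| == k].

(* C_k = Z_2-vector space with basis the k-subsets: row vectors 'rV['F_2]_#|ksub n k|,
   coordinate i corresponds to the basis subset enum_val i.
   The boundary d_k : C_k -> C_(k-2) acts on row vectors by u |-> u *m bdry n k;
   row Delta of the matrix is d_k(Delta) = sum of the (k-2)-subsets Gamma of Delta.
   (Only used for k >= 2, where k - 2 is the genuine difference.) *)
Definition bdry (n k : nat) : 'M['F_2]_(#|ksub n k|, #|ksub n (k - 2)|) :=
  \matrix_(i < #|ksub n k|, j < #|ksub n (k - 2)|)
    ((enum_val j \subset enum_val i)%:R)%R.

(* Over F_2 a chain is its coefficient function on subsets, and the boundary of the
   statement is [bd 2], where [bd j f B] sums [f] over the supersets of [B] with [j] more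
   elements.  Counting intermediate sets gives [bd i (bd j f) = 'C(i + j, i) * bd (i + j) f],
   so [bd 1] and [bd 2] commute and square to zero.
   Fix two points a, b of a ground set U with |U| = 2j and write a (j+1)-chain on U as
   c = e0 + a e1 + b e2 + ab e3, with the e_i living on U' = U - {a, b}.  Then c is a cycle
   iff e3 = bd2 e0 + bd1 e1 + bd1 e2 and bd2 e1 = bd2 e2 = bd1 e3, and the substitution
   y_i = e_i + bd1 e0 turns these conditions into: e0 arbitrary, y1 and y2 cycles.  Hence
   dim Z_(j+1)(U) = C(2j-2, j+1) + 2 dim Z_j(U'), a recursion solved by the formula. *)

From mathcomp Require Import all_boot all_order all_algebra.
From mathcomp Require Import zify mxabelem.

Set Implicit Arguments. Unset Strict Implicit. Unset Printing Implicit Defensive.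
Import GRing.Theory.
Local Open Scope ring_scope.

Lemma F2_cases (x : 'F_2) : x = 0 \/ x = 1.
Proof. by case: x => -[|[|//]] lt_x; [left|right]; apply/val_inj. Qed.

Lemma F2_natr_even n : ~~ odd n -> n%:R = 0 :> 'F_2.
Proof. by move=> even_n; apply/val_inj; rewrite /= val_Fp_nat // modn2 (negbTE even_n). Qed.

Lemma card_interval (T : finType) (B C : {set T}) i : B \subset C ->
  #|[set A : {set T} | [&& B \subset A, A \subset C & #|A| == #|B| + i]%N]|
    = 'C(#|C| - #|B|, i).
Proof.
move=> sBC; rewrite -cardsDS // -cards_draws.
set D := [set A : {set T} | A \subset C :\: B & #|A| == i].
have disjB A : A \in D -> [disjoint A & B].
  rewrite inE => /andP[sAD _]; apply: disjointWl sAD _.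
  by rewrite disjoints_subset setDE subsetIr.
have addBK : {in D, cancel (fun A => A :|: B) (fun A => A :\: B)}.
  by move=> A /disjB dAB; rewrite /= setDUl setDv setU0; apply/setDidPl.
rewrite -(card_in_imset (can_in_inj addBK)); apply: eq_card => A; rewrite inE.
apply/and3P/imsetP => [[sBA sAC /eqP cardA]|[A' D_A' ->]].
  exists (A :\: B); last by rewrite setUC -{1}(setID A B) (setIidPr sBA).
  by rewrite inE setSD //= cardsDS // cardA addKn.
have dA'B := disjB A' D_A'; move: D_A'; rewrite inE => /andP[sA'D /eqP cardA'].
rewrite subsetUr subUset sBC (subset_trans sA'D) ?subsetDl //.
by rewrite cardsU (disjoint_setI0 dA'B) cards0 subn0 cardA' addnC.
Qed.

Lemma ffunDE (aT : finType) (R : nmodType) (f g : {ffun aT -> R}) x :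
  (f + g) x = f x + g x.
Proof. by rewrite ffunE. Qed.

Lemma ffun0E (aT : finType) (R : nmodType) x : (0 : {ffun aT -> R}) x = 0.
Proof. by rewrite ffunE. Qed.

Ltac F2_linear :=
  let B := fresh "B" in apply/ffunP => B; rewrite ?ffunDE ?ffun0E;
  repeat match goal with |- context [?f B] => case: (F2_cases (f B)) => -> end;
  by apply/val_inj.

Section Chains.
Variable T : finType.

Definition chain := {ffun {set T} -> 'F_2}.
Implicit Types (f g : chain) (a : T) (A B C U : {set T}).

Definition bd j f : chain :=
  [ffun B : {set T} => \sum_(A : {set T} | (B \subset A) && (#|A| == #|B| + j)%N) f A].

Definition cone a f : chain := [ffun B : {set T} => if a \in B then f (B :\ a) else 0].

Definition avoids a f := forall A, a \in A -> f A = 0.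

Lemma chain_addrr f : f + f = 0.
Proof. by F2_linear. Qed.

Lemma bdD j f g : bd j (f + g) = bd j f + bd j g.
Proof.
by apply/ffunP => B; rewrite !ffunE -big_split; apply: eq_bigr => A _; rewrite ffunE.
Qed.

Lemma bd0 j : bd j 0 = 0.
Proof. by apply/ffunP => B; rewrite !ffunE big1 // => A _; rewrite ffunE. Qed.

Lemma bd_id f : bd 0 f = f.
Proof.
apply/ffunP => B; rewrite ffunE (big_pred1 B) // => A /=.
rewrite addn0; apply/andP/eqP => [[sBA /eqP cardA]|->] //.
by apply/esym/eqP; rewrite eqEcard sBA cardA leqnn.
Qed.

Lemma coneD a f g : cone a (f + g) = cone a f + cone a g.
Proof. by apply/ffunP => B; rewrite !ffunE; case: ifP; rewrite ?ffunE ?addr0. Qed.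

Lemma cone0 a : cone a 0 = 0.
Proof. by apply/ffunP => B; rewrite !ffunE; case: ifP; rewrite ?ffunE. Qed.

Lemma bd_comp i j f : bd i (bd j f) = bd (i + j)%N f *+ 'C(i + j, i)%N.
Proof.
apply/ffunP => B; rewrite ffunMnE !ffunE.
pose P A := (B \subset A) && (#|A| == #|B| + i)%N.
pose Q A C := (A \subset C) && (#|C| == #|A| + j)%N.
transitivity (\sum_(A : {set T}) \sum_(C : {set T}) (if P A && Q A C then f C else 0)).
  rewrite big_mkcond; apply: eq_bigr => A _; rewrite ffunE -/(P A).
  by case: (P A); [rewrite big_mkcond | rewrite big1].
rewrite exchange_big -sumrMnl [RHS]big_mkcond /=; apply: eq_bigr => C _.
rewrite -big_mkcond sumr_const.
have [/andP[sBC /eqP cardC]|notBC] := boolP ((B \subset C) && (#|C| == #|B| + (i + j))%N).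
  have -> : 'C(i + j, i) = 'C(#|C| - #|B|, i) by rewrite cardC addKn.
  rewrite -card_interval //; congr (_ *+ _); apply: eq_card => A; rewrite !inE /P /Q.
  apply/andP/and3P => [[/andP[-> /eqP cardA] /andP[-> _]]|[-> -> /eqP cardA]].
    by rewrite cardA.
  by rewrite cardA cardC addnA !eqxx.
rewrite (_ : #|_| = 0%N) ?mulr0n //; apply: eq_card0 => A; rewrite /P /Q.
apply/negP => /andP[/andP[sBA /eqP cardA] /andP[sAC /eqP cardC]].
by move: notBC; rewrite (subset_trans sBA sAC) cardC cardA addnA eqxx.
Qed.

Lemma bd_comp_even i j f : ~~ odd 'C(i + j, i)%N -> bd i (bd j f) = 0.
Proof.
move=> even_C; apply/ffunP => B.
by rewrite bd_comp ffunMnE -mulr_natr F2_natr_even // mulr0 ffunE.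
Qed.

Lemma bd11 f : bd 1 (bd 1 f) = 0. Proof. exact: bd_comp_even. Qed.
Lemma bd22 f : bd 2 (bd 2 f) = 0. Proof. exact: bd_comp_even. Qed.
Lemma bd21C f : bd 2 (bd 1 f) = bd 1 (bd 2 f). Proof. by rewrite !bd_comp. Qed.

Lemma avoids_bd a j g : avoids a g -> avoids a (bd j g).
Proof.
move=> ag B aB; rewrite ffunE big1 // => A /andP[sBA _]; apply: ag.
exact: (subsetP sBA).
Qed.

Lemma avoids_cone a b g : a != b -> avoids a g -> avoids a (cone b g).
Proof. by move=> ab ag B aB; rewrite ffunE; case: ifP => // _; rewrite ag // !inE ab. Qed.

Lemma avoidsD a f g : avoids a f -> avoids a g -> avoids a (f + g).
Proof. by move=> af ag B aB; rewrite ffunE af ?ag ?addr0. Qed.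

Lemma sum_cone (R : nmodType) a (F : {set T} -> R) : (forall A, a \in A -> F A = 0) ->
  \sum_(A : {set T}) F A = \sum_(A : {set T}) (if a \in A then F (A :\ a) else 0).
Proof.
move=> Fa; pose t (A : {set T}) := if a \in A then A :\ a else a |: A.
have tK : involutive t.
  by move=> A; rewrite /t; case: (boolP (a \in A)) => aA;
    rewrite ?setD11 ?setD1K ?setU11 ?setU1K.
rewrite (reindex_inj (inv_inj tK)); apply: eq_bigr => A _.
by rewrite /t; case: ifP => // aA; rewrite Fa // setU11.
Qed.

Lemma bd_cone j a g : avoids a g -> bd j.+1 (cone a g) = cone a (bd j.+1 g) + bd j g.
Proof.
move=> ag; apply/ffunP => B; rewrite !ffunE.
have sum_coneP (P : pred {set T}) : \sum_(A | P A) g A =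
    \sum_(A : {set T}) (if a \in A then (if P (A :\ a) then g (A :\ a) else 0) else 0).
  by rewrite big_mkcond; apply: sum_cone => A aA; rewrite ag //; case: (P A).
rewrite big_mkcond; case: (boolP (a \in B)) => aB.
  rewrite [X in _ = _ + X]big1 ?addr0; last first.
    by move=> A /andP[sBA _]; apply: ag; apply: (subsetP sBA).
  rewrite sum_coneP; apply: eq_bigr => A _ /=; rewrite ffunE.
  case: (boolP (a \in A)) => aA; last first.
    by case: ifP => // /andP[sBA _]; case/negP: aA; apply: (subsetP sBA).
  rewrite subsetD1 !inE eqxx andbT subDset (setUidPr _) ?sub1set //.
  by rewrite [#|A|](cardsD1 a) [#|B|](cardsD1 a) aA aB !add1n addSn eqSS addnS; case: ifP.
rewrite add0r sum_coneP; apply: eq_bigr => A _ /=; rewrite ffunE.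
case: (boolP (a \in A)) => aA; last by case: ifP.
rewrite subsetD1 aB andbT [#|A|](cardsD1 a) aA add1n addnS eqSS.
by case: ifP.
Qed.

Definition supported U k f := [forall A, (f A != 0) ==> (A \subset U) && (#|A| == k)].
Definition chains U k := [set f | supported U k f].
Definition cycles U k := [set f in chains U k | bd 2 f == 0].

Lemma supportedP U k f :
  reflect (forall A, f A != 0 -> (A \subset U) && (#|A| == k)) (supported U k f).
Proof. by apply: (iffP forallP) => fP A; [apply/implyP: (fP A) | apply/implyP/fP]. Qed.

Lemma card_chains U k : #|chains U k| = (2 ^ 'C(#|U|, k))%N.
Proof.
pose Q := [set A : {set T} | A \subset U & #|A| == k].
transitivity #|pffun_on (0 : 'F_2) Q predT|.
  apply: eq_card => f; rewrite inE; apply/supportedP/pffun_onP.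
    by move=> fP; split=> // ; apply/subsetP => A; rewrite supportE inE; exact: fP.
  by case=> /subsetP sfQ _ A nz_fA; have := sfQ A; rewrite supportE !inE; exact.
by rewrite card_pffun_on cards_draws cardT -cardE card_Fp.
Qed.

Lemma supported_bd U k j f : supported U (j + k)%N f -> supported U k (bd j f).
Proof.
move/supportedP=> fP; apply/supportedP => B; apply: contraR => notB.
rewrite ffunE big1 // => A /andP[sBA /eqP cardA]; apply/eqP; apply: contraR notB.
by case/fP/andP => sAU /eqP; rewrite (subset_trans sBA sAU) cardA => /eqP; rewrite addnC eqn_add2l.
Qed.

Lemma supportedD U k f g : supported U k f -> supported U k g -> supported U k (f + g).
Proof.
move=> /supportedP fP /supportedP gP; apply/supportedP => A; rewrite ffunE.
by case: (eqVneq (f A) 0) => [-> | /fP //]; rewrite add0r; exact: gP.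
Qed.

Lemma supportedS U1 U2 k f : U1 \subset U2 -> supported U1 k f -> supported U2 k f.
Proof.
move=> sU12 /supportedP fP; apply/supportedP => A /fP /andP[sA ->].
by rewrite (subset_trans sA sU12).
Qed.

Lemma supported_cone a U k g :
  a \in U -> supported (U :\ a) k g -> supported U k.+1 (cone a g).
Proof.
move=> aU /supportedP gP; apply/supportedP => B; rewrite ffunE.
case: ifP => [aB /gP /andP[sB /eqP cardB] | _]; last by rewrite eqxx.
by rewrite -(setD1K aB) -(setD1K aU) setUS //= cardsU1 !inE eqxx /= cardB.
Qed.

Lemma supported_avoids a U k g : a \notin U -> supported U k g -> avoids a g.
Proof.
move=> aU /supportedP gP A aA; apply/eqP; apply: contraR aU => /gP /andP[sAU _].
exact: (subsetP sAU).
Qed.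
End Chains.

Section TwoPoints.
Variables (T : finType) (a b : T) (U : {set T}).
Hypotheses (aU : a \in U) (bU : b \in U) (neq_ab : a != b).
Implicit Types (c e : chain T) (A B X : {set T}).

Let U' := U :\ a :\ b.

Definition avoids_ab e := avoids a e /\ avoids b e.

Lemma avoids_abD e e' : avoids_ab e -> avoids_ab e' -> avoids_ab (e + e').
Proof. by case=> ae be [ae' be']; split; apply: avoidsD. Qed.

Lemma avoids_ab_bd j e : avoids_ab e -> avoids_ab (bd j e).
Proof. by case=> ae be; split; apply: avoids_bd. Qed.

Lemma supported_avoids_ab j e : supported U' j e -> avoids_ab e.
Proof. by move=> sU'e; split; apply: supported_avoids sU'e; rewrite !inE eqxx ?andbF. Qed.

Definition part X c : chain T :=
  [ffun B : {set T} => if (a \notin B) && (b \notin B) then c (X :|: B) else 0].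

Definition glue (e0 e1 e2 e3 : chain T) : chain T :=
  e0 + cone a e1 + cone b e2 + cone a (cone b e3).

Lemma glue_part c :
  c = glue (part set0 c) (part [set a] c) (part [set b] c) (part [set a; b] c).
Proof.
have neq_ba : b != a by rewrite eq_sym.
apply/ffunP => A; rewrite /glue !ffunE !in_setD1 !eqxx (negbTE neq_ab) (negbTE neq_ba) /=.
case: (boolP (a \in A)) => aA; case: (boolP (b \in A)) => bA /=;
  rewrite ?add0r ?addr0 ?set0U -?setUA ?(setD1K aA) ?(setD1K bA) //.
have bAa : b \in A :\ a by rewrite in_setD1 neq_ba.
by rewrite (setD1K bAa) (setD1K aA).
Qed.

Section GluedParts.
Variables e0 e1 e2 e3 : chain T.
Hypotheses (o0 : avoids_ab e0) (o1 : avoids_ab e1) (o2 : avoids_ab e2) (o3 : avoids_ab e3).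

Lemma part0_glue : part set0 (glue e0 e1 e2 e3) = e0.
Proof.
move: o0 o1 o2 o3 => [a0 b0] [a1 b1] [a2 b2] [a3 b3].
apply/ffunP => A; rewrite /glue !ffunE set0U.
by case: (boolP (a \in A)) => aA; case: (boolP (b \in A)) => bA /=;
  rewrite ?addr0 //; [rewrite a0 | rewrite a0 | rewrite b0].
Qed.

Lemma parta_glue : part [set a] (glue e0 e1 e2 e3) = e1.
Proof.
move: o0 o1 o2 o3 => [a0 b0] [a1 b1] [a2 b2] [a3 b3].
apply/ffunP => A; rewrite /glue !ffunE -/(a |: A) !in_setU1 eqxx eq_sym (negbTE neq_ab) /=.
case: (boolP (a \in A)) => aA; case: (boolP (b \in A)) => bA /=; try by [rewrite a1 | rewrite b1].
by rewrite a0 ?setU11 // (setU1K aA) add0r (negbTE bA) !addr0.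
Qed.

Lemma partb_glue : part [set b] (glue e0 e1 e2 e3) = e2.
Proof.
move: o0 o1 o2 o3 => [a0 b0] [a1 b1] [a2 b2] [a3 b3].
apply/ffunP => A; rewrite /glue !ffunE -/(b |: A) !in_setU1 eqxx (negbTE neq_ab) /=.
case: (boolP (a \in A)) => aA; case: (boolP (b \in A)) => bA /=; try by [rewrite a2 | rewrite b2].
by rewrite b0 ?setU11 // (setU1K bA) !add0r addr0.
Qed.

Lemma partab_glue : part [set a; b] (glue e0 e1 e2 e3) = e3.
Proof.
move: o0 o1 o2 o3 => [a0 b0] [a1 b1] [a2 b2] [a3 b3].
apply/ffunP => A; rewrite /glue !ffunE -setUA -/(b |: A) -/(a |: (b |: A)).
rewrite !in_setU1 !eqxx /=.
case: (boolP (a \in A)) => aA; case: (boolP (b \in A)) => bA /=; try by [rewrite a3 | rewrite b3].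
have abA : a \notin b |: A by rewrite in_setU1 (negbTE neq_ab) aA.
rewrite a0 ?setU11 // (setU1K abA) b1 ?setU11 // !add0r orbT a2; last first.
  by rewrite in_setD1 neq_ab in_setU1 eqxx.
by rewrite add0r (setU1K bA).
Qed.

Lemma bd_glue : bd 2 (glue e0 e1 e2 e3) =
  glue (bd 2 e0 + bd 1 e1 + bd 1 e2 + e3) (bd 2 e1 + bd 1 e3) (bd 2 e2 + bd 1 e3) (bd 2 e3).
Proof.
move: o0 o1 o2 o3 => [a0 b0] [a1 b1] [a2 b2] [a3 b3].
have a_be3 : avoids a (cone b e3) by apply: avoids_cone.
rewrite /glue !bdD (bd_cone 1 a1) (bd_cone 1 b2) (bd_cone 1 a_be3) (bd_cone 1 b3).
by rewrite (bd_cone 0 b3) bd_id !coneD; F2_linear.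
Qed.

Lemma glue_eq0 : glue e0 e1 e2 e3 = 0 <-> [/\ e0 = 0, e1 = 0, e2 = 0 & e3 = 0].
Proof.
split=> [glue0 | [-> -> -> ->]]; last by rewrite /glue !cone0 !addr0.
have part0 X : part X 0 = 0 by apply/ffunP => A; rewrite !ffunE; case: ifP.
by split; [rewrite -part0_glue | rewrite -parta_glue | rewrite -partb_glue
  | rewrite -partab_glue]; rewrite glue0 part0.
Qed.
End GluedParts.

Lemma glue_cycleP e0 e1 e2 e3 :
    avoids_ab e0 -> avoids_ab e1 -> avoids_ab e2 -> avoids_ab e3 ->
  bd 2 (glue e0 e1 e2 e3) = 0 <->
  [/\ e3 = bd 2 e0 + bd 1 e1 + bd 1 e2, bd 2 e1 = bd 1 e3 & bd 2 e2 = bd 1 e3].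
Proof.
move=> o0 o1 o2 o3; rewrite bd_glue // glue_eq0; last first.
- exact: avoids_ab_bd.
- by apply: avoids_abD; apply: avoids_ab_bd.
- by apply: avoids_abD; apply: avoids_ab_bd.
- by repeat apply: avoids_abD; try apply: avoids_ab_bd.
split=> [[E0 E1 E2 _] | [def_e3 E1 E2]].
  by split; [rewrite -[LHS]add0r -E0 | rewrite -[LHS]addr0 -E1 | rewrite -[LHS]addr0 -E2];
    F2_linear.
split.
- by rewrite def_e3; F2_linear.
- by rewrite E1; F2_linear.
- by rewrite E2; F2_linear.
- by rewrite def_e3 !bdD bd22 !bd21C E1 E2 !bd11 !addr0.
Qed.

Lemma subset_U' A : (A \subset U') = [&& A \subset U, a \notin A & b \notin A].
Proof. by rewrite /U' !subsetD1 andbA. Qed.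

Lemma supported_part X j c : X \subset [set a; b] ->
  supported U (#|X| + j)%N c -> supported U' j (part X c).
Proof.
move=> sXab /supportedP cP; apply/supportedP => B; rewrite ffunE.
case: ifP => [/andP[aB bB] /cP /andP[sXBU /eqP cardXB] | _]; last by rewrite eqxx.
have dXB : [disjoint X & B].
  rewrite disjoints_subset; apply: (subset_trans sXab).
  by apply/subsetP => x; rewrite !inE => /orP[] /eqP ->; rewrite ?aB ?bB.
rewrite subset_U' (subset_trans (subsetUr X B) sXBU) aB bB /=.
by move: cardXB; rewrite cardsU (disjoint_setI0 dXB) cards0 subn0 => /addnI ->.
Qed.

Lemma supported_glue j e0 e1 e2 e3 :
    supported U' j.+2 e0 -> supported U' j.+1 e1 -> supported U' j.+1 e2 ->
    supported U' j e3 ->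
  supported U j.+2 (glue e0 e1 e2 e3).
Proof.
have sU'Ua : U' \subset U :\ a by apply: subsetDl.
have sU'U : U' \subset U by apply: subset_trans sU'Ua (subsetDl _ _).
have sU'Ub : U' \subset U :\ b by rewrite /U' setDDl setUC -setDDl subsetDl.
have bUa : b \in U :\ a by rewrite !inE eq_sym neq_ab.
move=> s0 s1 s2 s3; rewrite /glue; apply: supportedD; [apply: supportedD; [apply: supportedD|]|].
- exact: supportedS s0.
- by apply: supported_cone aU _; apply: supportedS s1.
- by apply: supported_cone bU _; apply: supportedS s2.
- by apply: supported_cone aU _; apply: supported_cone bUa _.
Qed.

Definition cycle_glue (x : chain T * chain T * chain T) : chain T :=
  let: (c0, y1, y2) := x in
  glue c0 (y1 + bd 1 c0) (y2 + bd 1 c0) (bd 2 c0 + bd 1 (y1 + y2)).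

Definition cycle_split c : chain T * chain T * chain T :=
  let c0 := part set0 c in (c0, part [set a] c + bd 1 c0, part [set b] c + bd 1 c0).

Variable k : nat.

Definition cycle_triples :=
  setX (setX (chains U' k.+2) (cycles U' k.+1)) (cycles U' k.+1).

Lemma cycle_glueK x :
  x \in cycle_triples -> cycle_glue x \in cycles U k.+2 /\ cycle_split (cycle_glue x) = x.
Proof.
case: x => [[c0 y1] y2]; rewrite !inE /=.
case/andP=> [/andP[s0 /andP[s1 /eqP y1_cycle]] /andP[s2 /eqP y2_cycle]].
have [s1' s2'] : supported U' k.+1 (y1 + bd 1 c0) /\ supported U' k.+1 (y2 + bd 1 c0).
  by split; rewrite supportedD // supported_bd.
have s3 : supported U' k (bd 2 c0 + bd 1 (y1 + y2)).
  by rewrite supportedD // supported_bd ?supportedD.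
have o0 := supported_avoids_ab s0; have o1 := supported_avoids_ab s1'.
have o2 := supported_avoids_ab s2'; have o3 := supported_avoids_ab s3.
split; last first.
  by rewrite /cycle_split part0_glue ?parta_glue ?partb_glue //; congr (_, _, _); F2_linear.
rewrite supported_glue //=; apply/eqP/glue_cycleP => //.
by split; rewrite !bdD !bd11 ?y1_cycle ?y2_cycle ?bd21C; F2_linear.
Qed.

Lemma cycle_splitK c :
  c \in cycles U k.+2 -> cycle_split c \in cycle_triples /\ cycle_glue (cycle_split c) = c.
Proof.
rewrite !inE => /andP[sc /eqP c_cycle].
have sc_part X j : X \subset [set a; b] -> (#|X| + j = k.+2)%N -> supported U' j (part X c).
  by move=> sXab cardX; apply: supported_part sXab _; rewrite cardX.
have s0 : supported U' k.+2 (part set0 c) by apply: sc_part; rewrite ?sub0set ?cards0.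
have s1 : supported U' k.+1 (part [set a] c) by apply: sc_part; rewrite ?cards1 ?subsetUl.
have s2 : supported U' k.+1 (part [set b] c) by apply: sc_part; rewrite ?cards1 ?subsetUr.
have s3 : supported U' k (part [set a; b] c) by apply: sc_part; rewrite ?cards2 ?neq_ab.
have o := supported_avoids_ab.
move: c_cycle; rewrite [c in bd 2 c]glue_part.
case/(glue_cycleP (o _ _ s0) (o _ _ s1) (o _ _ s2) (o _ _ s3)) => def_e3 E1 E2.
rewrite /cycle_split; split.
  rewrite /= s0 !supportedD ?supported_bd //= !bdD bd21C E1 E2 def_e3.
  by rewrite !bdD !bd11 !addr0 chain_addrr eqxx.
rewrite [RHS]glue_part /= def_e3 !bdD !bd11; congr glue; F2_linear.
Qed.

Lemma card_cycles_step :
  #|cycles U k.+2| = (#|chains U' k.+2| * #|cycles U' k.+1| ^ 2)%N.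
Proof.
have glue_inj : {in cycle_triples &, injective cycle_glue}.
  by move=> x y /cycle_glueK[_ xK] /cycle_glueK[_ yK] eq_xy; rewrite -xK -yK eq_xy.
have -> : cycles U k.+2 = cycle_glue @: cycle_triples.
  apply/setP => c; apply/idP/imsetP => [/cycle_splitK[] | [x /cycle_glueK[? _] ->//]].
  by exists (cycle_split c).
by rewrite (card_in_imset glue_inj) !cardsX -mulnA.
Qed.
End TwoPoints.

Fixpoint cycle_dim j :=
  if j is j'.+1 then ('C(2 * j', j'.+2) + 2 * cycle_dim j')%N else 0%N.

Lemma card_cycles (T : finType) (U : {set T}) j :
  #|U| = (2 * j)%N -> #|cycles U j.+1| = (2 ^ cycle_dim j)%N.
Proof.
elim: j U => [|j IHj] U cardU.
  have cycle0 : 0 \in cycles U 1.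
    by rewrite !inE bd0 eqxx andbT; apply/supportedP => A; rewrite ffunE eqxx.
  have sub_chains : cycles U 1 \subset chains U 1.
    by apply/subsetP => f; rewrite inE => /andP[].
  apply/eqP; rewrite eqn_leq card_gt0 (leq_trans (subset_leq_card sub_chains)).
    by apply/set0Pn; exists 0.
  by rewrite card_chains cardU.
have [a aU] : exists a, a \in U by apply/set0Pn; rewrite -card_gt0 cardU.
have [b bUa] : exists b, b \in U :\ a.
  by apply/set0Pn; rewrite -card_gt0 (cardsD1 a U) aU in cardU *; lia.
have [neq_ba bU] := setD1P bUa; rewrite eq_sym in neq_ba.
have cardU' : #|U :\ a :\ b| = (2 * j)%N.
  by move: cardU; rewrite (cardsD1 a U) aU (cardsD1 b (U :\ a)) bUa; lia.
rewrite (card_cycles_step aU bU neq_ba j) card_chains IHj // cardU'.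
by rewrite -expnM -expnD [(cycle_dim j * 2)%N]mulnC.
Qed.

Lemma binS2 n k : 'C(n.+2, k.+2) = ('C(n, k.+2) + 2 * 'C(n, k.+1) + 'C(n, k))%N.
Proof. by rewrite !binS; lia. Qed.

Definition central_binom_sum m := (\sum_(i < m) 2 ^ (m.-1 - i) * 'C(2 * i, i))%N.

Lemma central_binom_sumS m :
  central_binom_sum m.+1 = (2 * central_binom_sum m + 'C(2 * m, m))%N.
Proof.
rewrite /central_binom_sum big_ord_recr /= subnn mul1n big_distrr /=; congr (_ + _)%N.
apply: eq_bigr => i _; rewrite mulnA -expnS; congr (2 ^ _ * _)%N.
by have := ltn_ord i; lia.
Qed.

Lemma cycle_dim_binom m :
  (cycle_dim m.+1 + central_binom_sum m.+1)%N = 'C(2 * m.+1, m).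
Proof.
elim: m => [|m IHm]; first by rewrite /central_binom_sum big_ord1.
rewrite central_binom_sumS [cycle_dim m.+2]/=.
have -> : ('C(2 * m.+1, m.+3) + 2 * cycle_dim m.+1 + (2 * central_binom_sum m.+1
  + 'C(2 * m.+1, m.+1)) = 'C(2 * m.+1, m.+3) + 2 * 'C(2 * m.+1, m) + 'C(2 * m.+1, m.+1))%N.
  by rewrite -IHm; lia.
have e1 : 'C(2 * m.+2, m.+1) = 'C((2 * m.+1).+2, m.+3).
  by rewrite -bin_sub; [congr 'C(_, _) | ]; lia.
have e2 : 'C(2 * m.+1, m) = 'C(2 * m.+1, m.+2).
  by rewrite -bin_sub; [congr 'C(_, _) | ]; lia.
by rewrite e1 binS2 e2.
Qed.

Section BoundaryMatrix.
Variables n k : nat.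
Local Notation N := #|ksub n k.+2|.

Definition chain_of_row (u : 'rV['F_2]_N) : chain 'I_n :=
  [ffun A : {set 'I_n} => \sum_(i : 'I_N | enum_val i == A) u 0 i].

Lemma chain_of_row_enum u i : chain_of_row u (enum_val i) = u 0 i.
Proof. by rewrite ffunE (big_pred1 i) // => i'; rewrite (inj_eq enum_val_inj). Qed.

Lemma chain_of_row_inj : injective chain_of_row.
Proof. by move=> u v eq_uv; apply/rowP => i; rewrite -!chain_of_row_enum eq_uv. Qed.

Lemma supported_chain_of_row u : supported [set: 'I_n] k.+2 (chain_of_row u).
Proof.
apply/supportedP => A; rewrite subsetT /=; apply: contraR => cardA.
rewrite ffunE big_pred0 // => i; apply/negP => /eqP def_A.
by move: (enum_valP i); rewrite def_A inE (negbTE cardA).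
Qed.

Lemma chain_of_row_onto c :
  supported [set: 'I_n] k.+2 c -> chain_of_row (\row_i c (enum_val i)) = c.
Proof.
move/supportedP=> cP; apply/ffunP => A; rewrite ffunE.
have [Ak | notAk] := boolP (A \in ksub n k.+2).
  rewrite (big_pred1 (enum_rank_in Ak A)) ?mxE ?enum_rankK_in // => i.
  apply/eqP/eqP => [def_A | ->]; last by rewrite enum_rankK_in.
  by rewrite -[LHS](enum_valK_in Ak) def_A.
rewrite big_pred0 => [|i]; last first.
  by apply/negP => /eqP def_A; rewrite -def_A enum_valP in notAk.
by apply/esym/eqP; apply: contraR notAk => /cP /andP[_ cardA]; rewrite inE.
Qed.

Lemma bd_chain_of_row u j :
  bd 2 (chain_of_row u) (enum_val j) = (u *m bdry n k.+2) 0 j.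
Proof.
set B := enum_val j.
have cardB : #|B| = k by have := enum_valP j; rewrite inE => /eqP ->; lia.
have -> : (u *m bdry n k.+2) 0 j = \sum_(i : 'I_N | B \subset enum_val i) u 0 i.
  rewrite mxE [RHS]big_mkcond; apply: eq_bigr => i _; rewrite mxE.
  by case: ifP; rewrite ?mulr1 ?mulr0.
rewrite ffunE (partition_big (@enum_val _ (mem (ksub n k.+2)))
  (fun A => (B \subset A) && (#|A| == #|B| + 2)%N)) => [|i sBi] /=; last first.
  by have := enum_valP i; rewrite inE sBi cardB addn2.
apply: eq_bigr => A /andP[sBA _]; rewrite ffunE; apply: eq_bigl => i.
by case: eqP => [-> | _]; rewrite ?sBA ?andbF.
Qed.

Lemma chain_of_row_cycle u :
  (chain_of_row u \in cycles [set: 'I_n] k.+2) = (u *m bdry n k.+2 == 0).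
Proof.
rewrite !inE supported_chain_of_row /=; apply/eqP/eqP => [cycle_u | ker_u].
  by apply/rowP => j; rewrite -bd_chain_of_row cycle_u !mxE ffunE.
apply/ffunP => B; rewrite ffun0E; have [Bk | notBk] := boolP (B \in ksub n (k.+2 - 2)).
  by rewrite -(enum_rankK_in Bk Bk) bd_chain_of_row ker_u mxE.
have /supportedP bdP := supported_bd (j := 2) (supported_chain_of_row u).
apply/eqP; apply: contraR notBk => /bdP /andP[_ /eqP cardB].
by rewrite inE cardB; apply/eqP; lia.
Qed.

Lemma card_kernel_bdry :
  #|[set u : 'rV['F_2]_N | u *m bdry n k.+2 == 0]| = #|cycles [set: 'I_n] k.+2|.
Proof.
rewrite -(card_imset _ chain_of_row_inj); apply: eq_card => c.
apply/imsetP/idP => [[u] | c_cycle]; first by rewrite inE -chain_of_row_cycle => ? ->.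
have sc : supported [set: 'I_n] k.+2 c by move: c_cycle; rewrite !inE => /andP[].
exists (\row_i c (enum_val i)); last by rewrite chain_of_row_onto.
by rewrite inE -chain_of_row_cycle chain_of_row_onto.
Qed.
End BoundaryMatrix.

Lemma card_kermx_F2 m p (A : 'M['F_2]_(m, p)) :
  #|[set u : 'rV_m | u *m A == 0]| = (2 ^ \rank (kermx A))%N.
Proof.
transitivity (#|'F_2| ^ \rank (kermx A))%N; last by rewrite card_Fp.
by rewrite -card_rowg; apply: eq_card => u; rewrite !inE sub_kermx.
Qed.

Theorem mainTheorem7 (m : nat) (hm : (1 <= m)%N) :
  ((\rank (kermx (bdry (2 * m) m.+1)))%:Z =
   ('C(2 * m, m.-1))%:Z - (\sum_(i < m) 2 ^ (m.-1 - i) * 'C(2 * i, i))%N%:Z)%R.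
Proof.
case: m hm => [//|m] _.
have -> : \rank (kermx (bdry (2 * m.+1) m.+2)) = cycle_dim m.+1.
  apply/eqP; rewrite -(eqn_exp2l _ _ (ltnSn 1)) -card_kermx_F2 card_kernel_bdry.
  by rewrite (card_cycles (j := m.+1)) // cardsT card_ord.
by rewrite -cycle_dim_binom PoszD addrK.
Qed.
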